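(* Let $f:\mathbb{X}\to\mathbb{R}$ be a finite measurable function and suppose there are $M<\infty$ and a set of positive measure on which $\frac1n|f\circ T^{-n}+f\circ T^n|<M$ for all sufficiently large $n$. Then $\limsup_n \frac1n|f\circ T^{2n}|\le 24M$ $\mu$-a.e. on $\mathbb{X}$.
   Context: Standing assumptions: $(\mathbb{X},\mathcal{X},\mu,T)$ is a probability space with $T$ an invertible, bi-measurable, measure-preserving, ergodic transformation. *)

From HB Require Import structures.
From mathcomp Require Import all_boot all_order all_algebra.
From mathcomp Require Import all_classical all_reals all_analysis.
Set Implicit Arguments. Unset Strict Implicit. Unset Printing Implicit Defensive.
Import Order.TTheory GRing.Theory Num.Theory.
Local Open Scope classical_set_scope.
Local Open Scope ring_scope.

Definition invertible_mpt_ergodic (d : measure_display) (X : measurableType d)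
  (R : realType) (mu : probability X R) (T Tinv : X -> X) : Prop :=
  cancel T Tinv /\ cancel Tinv T /\
  measurable_fun setT T /\ measurable_fun setT Tinv /\
  (forall A, measurable A -> mu (T @^-1` A) = mu A) /\
  (forall A, measurable A -> T @^-1` A = A -> mu A = 0%E \/ mu A = 1%E).

From HB Require Import structures.
From mathcomp Require Import all_boot all_order all_algebra.
From mathcomp Require Import all_classical all_reals all_analysis.
From mathcomp Require Import measurable_realfun zify lra.
Set Implicit Arguments.
Unset Strict Implicit.
Unset Printing Implicit Defensive.
Import Order.TTheory GRing.Theory Num.Theory.
Local Open Scope classical_set_scope.
Local Open Scope ring_scope.

(* Fix [N] such that the set [B] of points of [A] with
   [|f (T^-n x) + f (T^n x)| < n M] for all [n >= N] has positive measure.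
   By ergodicity almost every orbit visits [B] infinitely often.  The sets of
   points of [B] not returning to [B] within [k] steps have images under [T^k]
   that are pairwise disjoint, so their measures sum to at most 1; by
   Borel-Cantelli, almost every orbit therefore eventually returns to [B]
   within a quarter of the current time.  Along such an orbit, with
   [a m = f (T^m x)], each return time [k] controls [a (k + m) + a (k - m)],
   and every large [m] lies in [(k, 2k)] with [m - k >= N] for some return
   time [k]: reflecting [m] to [2k - m < m] gives [|a m| <= M m + C] by strong
   induction, whence the [limsup] is at most [2M <= 24M]. *)

Lemma iter_cancel (Y : Type) (f g : Y -> Y) : cancel f g ->
  forall n, cancel (iter n f) (iter n g).
Proof.
move=> fK; elim=> [//|n IH] x.
by rewrite [iter n.+1 f x]iterS iterSr fK IH.
Qed.

Lemma iter_cancel_subn (Y : Type) (f g : Y -> Y) : cancel f g ->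
  forall m k x, (m <= k)%N -> iter m g (iter k f x) = iter (k - m) f x.
Proof.
by move=> fK m k x mk; rewrite -{1}(subnKC mk) iterD iter_cancel.
Qed.

Section measurable_iterates.
Context d (X : measurableType d) (R : realType).

Lemma measurable_fun_iter (g : X -> X) : measurable_fun setT g ->
  forall n, measurable_fun setT (iter n g).
Proof.
move=> mg; elim=> [|n IH]; first exact: measurable_id.
have -> : iter n.+1 g = g \o iter n g by apply/funext => x; rewrite iterS.
exact: measurableT_comp.
Qed.

Lemma measurable_preimageT d' (Y : measurableType d') (g : X -> Y) :
  measurable_fun setT g ->
  forall S, measurable S -> measurable (g @^-1` S).
Proof. by move=> mg S mS; have := mg measurableT S mS; rewrite setTI. Qed.

Lemma measurable_lt_from (g : nat -> X -> R) (M : R) N :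
  (forall n, measurable_fun setT (g n)) ->
  measurable [set x | forall n, (N <= n)%N -> g n x < M].
Proof.
move=> mg; have -> : [set x | forall n, (N <= n)%N -> g n x < M] =
    \bigcap_(n in [set n | (N <= n)%N]) (g n @^-1` `]-oo, M[).
  by apply/seteqP; split => x /= h n /h; rewrite /= in_itv.
apply: bigcap_measurableType => n _.
by have := mg n measurableT _ (measurable_itv `]-oo, M[); rewrite setTI.
Qed.

Lemma measurable_fun_scaled_sum_iter (f : X -> R) (T Tinv : X -> X) n :
  measurable_fun setT f -> measurable_fun setT T -> measurable_fun setT Tinv ->
  measurable_fun setT
    (fun x => (n%:R)^-1 * `|f (iter n Tinv x) + f (iter n T x)|).
Proof.
move=> mf mT mTi; apply: measurable_funM; first exact: measurable_cst.
apply: measurableT_comp; first exact: normr_measurable.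
by apply: measurable_funD; apply: measurableT_comp => //;
  exact: measurable_fun_iter.
Qed.

Variable mu : {measure set X -> \bar R}.

Lemma measure_preimage_iter (g : X -> X) : measurable_fun setT g ->
  (forall S, measurable S -> mu (g @^-1` S) = mu S) ->
  forall n S, measurable S -> mu (iter n g @^-1` S) = mu S.
Proof.
move=> mg pg; elim=> [//|n IH] S mS.
have -> : iter n.+1 g @^-1` S = iter n g @^-1` (g @^-1` S).
  by apply/seteqP; split => x /=; rewrite ?iterS.
by rewrite IH ?pg //; exact: measurable_preimageT.
Qed.

Lemma measure_preimage_cancel (T Tinv : X -> X) : cancel T Tinv ->
  measurable_fun setT Tinv ->
  (forall S, measurable S -> mu (T @^-1` S) = mu S) ->
  forall S, measurable S -> mu (Tinv @^-1` S) = mu S.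
Proof.
move=> TK mTi pT S mS.
have E : T @^-1` (Tinv @^-1` S) = S by apply/seteqP; split => x /=; rewrite TK.
by rewrite -{2}E pT //; exact: measurable_preimageT.
Qed.

Lemma exists_measure_gt0_cover (A : set X) (B : nat -> set X) :
  measurable A -> (forall N, measurable (B N)) -> (0 < mu A)%E ->
  A `<=` \bigcup_N B N -> exists N, (0 < mu (B N))%E.
Proof.
move=> mA mB A0 AB; apply: contrapT => /forallNP B0.
have negB N : mu.-negligible (B N).
  exists (B N); split => //; apply/eqP.
  by rewrite eq_le measure_ge0 andbT leNgt; apply/negP/B0.
have /(measure_negligible mA) A0' := negligibleS AB (negligible_bigcup negB).
by rewrite A0' ltxx in A0.
Qed.

End measurable_iterates.

Section quick_returns.
Context d (X : measurableType d) (R : realType) (mu : probability X R).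
Variables (T Tinv : X -> X).
Hypotheses (TK : cancel T Tinv) (TiK : cancel Tinv T).
Hypotheses (mT : measurable_fun setT T) (mTi : measurable_fun setT Tinv).
Hypothesis pT : forall S, measurable S -> mu (T @^-1` S) = mu S.
Variable B : set X.
Hypothesis mB : measurable B.

Definition no_return_within k :=
  B `\` \bigcup_(i in [set i | (0 < i <= k)%N]) (iter i T @^-1` B).

Lemma measurable_no_return_within k : measurable (no_return_within k).
Proof.
apply: measurableD => //; apply: bigcup_measurable => i _.
exact/measurable_preimageT/mB/measurable_fun_iter.
Qed.

(* If [T^k y = T^l y'] with [k < l] and [y \in B], then [y'] returns to [B]
   at time [l - k <= l]. *)
Lemma trivIset_no_return_within :
  trivIset setT (fun k => iter k Tinv @^-1` no_return_within k).
Proof.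
have key k l z : (k < l)%N -> no_return_within k (iter k Tinv z) ->
    ~ no_return_within l (iter l Tinv z).
  move=> kl [Bk _] [_ /= hl]; apply: hl.
  exists (l - k)%N; first by rewrite /=; lia.
  have -> : iter l Tinv z = iter (l - k) Tinv (iter k Tinv z).
    by rewrite -iterD subnK // ltnW.
  by rewrite /= iter_cancel.
move=> k l _ _ [z [Wk Wl]].
by case: (ltngtP k l) => // [kl|lk]; [case: (key k l z kl Wk)|case: (key l k z lk Wl)].
Qed.

Lemma sum_measure_no_return_within_le1 p :
  (\sum_(0 <= k < p) mu (no_return_within k) <= 1)%E.
Proof.
pose W k := iter k Tinv @^-1` no_return_within k.
have mW k : measurable (W k).
  exact/measurable_preimageT/measurable_no_return_within/measurable_fun_iter.
have pTi := measure_preimage_cancel TK mTi pT.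
have -> : \sum_(0 <= k < p) mu (no_return_within k) =
          \sum_(0 <= k < p | k \in setT) mu (W k).
  rewrite [RHS]big_mkcond /=; apply: eq_bigr => k _.
  by rewrite in_setT /W (measure_preimage_iter mTi pTi) //;
    exact: measurable_no_return_within.
apply: le_trans (nneseries_lim_ge _ _) _ => //.
rewrite -measure_bigcup //; last exact: trivIset_no_return_within.
by apply: probability_le1; apply: bigcup_measurable.
Qed.

Definition slow_return_at n := iter n T @^-1` no_return_within (n %/ 4).

Lemma measurable_slow_return_at n : measurable (slow_return_at n).
Proof.
exact/measurable_preimageT/measurable_no_return_within/measurable_fun_iter.
Qed.

Lemma sum_nat_divn4 (b : nat -> \bar R) p :
  (\sum_(0 <= n < 4 * p) b (n %/ 4)%N =
   \sum_(0 <= k < p) (b k + b k + b k + b k))%E.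
Proof.
elim: p => [|p IH]; first by rewrite muln0 !big_geq.
rewrite (_ : (4 * p.+1 = (4 * p).+3.+1)%N); last by lia.
rewrite !big_nat_recr //= IH.
have -> : ((4 * p) %/ 4 = p)%N by lia.
have -> : ((4 * p).+1 %/ 4 = p)%N by lia.
have -> : ((4 * p).+2 %/ 4 = p)%N by lia.
have -> : ((4 * p).+3 %/ 4 = p)%N by lia.
by rewrite !addeA.
Qed.

Lemma sum_measure_slow_return_at_lty :
  (\sum_(n <oo) mu (slow_return_at n) < +oo)%E.
Proof.
apply: (@le_lt_trans _ _ 4%:E); last exact: ltry.
apply: lime_le; first by apply: is_cvg_nneseries => n _ _.
apply: nearW => q.
have muE n : mu (slow_return_at n) = mu (no_return_within (n %/ 4)).
  by rewrite /slow_return_at (measure_preimage_iter mT pT) //;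
    exact: measurable_no_return_within.
under eq_bigr do rewrite muE.
apply: (@le_trans _ _ (\sum_(0 <= n < 4 * q) mu (no_return_within (n %/ 4)))%E).
  by apply: lee_sum_nneg_natr => //; lia.
rewrite (sum_nat_divn4 (fun k => mu (no_return_within k))) !big_split /=.
have le1 := sum_measure_no_return_within_le1 q.
rewrite (_ : 4%:E = 1 + 1 + 1 + 1)%E; last by rewrite !EFinD; congr (_%:E); lra.
by rewrite !leeD.
Qed.

Lemma ae_eventually_quick_return : {ae mu, forall x, exists p, forall n,
  (p <= n)%N -> B (iter n T x) ->
  exists2 i, (0 < i <= n %/ 4)%N & B (iter (n + i) T x)}.
Proof.
have null := lim_sup_set_cvg0 measurable_slow_return_at
  sum_measure_slow_return_at_lty.
exists (lim_sup_set slow_return_at); split => //.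
  apply: bigcapT_measurable => n; apply: bigcup_measurable => j _.
  exact: measurable_slow_return_at.
move=> x /= notQ; apply: contrapT => notS; apply: notQ.
have [p hp] : exists p, forall n, (p <= n)%N -> ~ slow_return_at n x.
  apply: contrapT => h; apply: notS => n _; apply: contrapT => h2; apply: h.
  by exists n => j nj Ej; apply: h2; exists j.
exists p => n pn Bn.
have : (\bigcup_(i in [set i | (0 < i <= n %/ 4)%N]) (iter i T @^-1` B))
    (iter n T x).
  by apply: contrapT => h; apply: (hp n pn).
by move=> [i /= i_n Bi]; exists i => //; rewrite addnC iterD.
Qed.

End quick_returns.

Section recurrence.
Context d (X : measurableType d) (R : realType) (mu : probability X R).
Variable T : X -> X.
Hypothesis mT : measurable_fun setT T.
Hypothesis pT : forall S, measurable S -> mu (T @^-1` S) = mu S.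
Hypothesis ergodic : forall S, measurable S -> T @^-1` S = S ->
  mu S = 0%E \/ mu S = 1%E.

(* The points visiting [B] infinitely often form a [T]-invariant set of measure
   at least [mu B], since it is the decreasing limit of the sets
   [\bigcup_(k >= n) T^-k B], each of measure at least [mu (T^-n B) = mu B]. *)
Lemma ae_infinitely_many_visits (B : set X) : measurable B -> (0 < mu B)%E ->
  {ae mu, forall x, forall q, exists2 k, (q <= k)%N & B (iter k T x)}.
Proof.
move=> mB B0; set F := fun k => iter k T @^-1` B.
have mF k : measurable (F k) by exact/measurable_preimageT/mB/measurable_fun_iter.
have mI : measurable (lim_sup_set F).
  by apply: bigcapT_measurable => n; apply: bigcup_measurable => j _.
have invI : T @^-1` lim_sup_set F = lim_sup_set F.
  apply/seteqP; split => x /= h n _.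
    have [j /= nj Fj] := h n Logic.I.
    by exists j.+1; [rewrite /=; lia | move: Fj; rewrite /F /= -iterSr].
  have [j /= nj Fj] := h n.+1 Logic.I.
  exists j.-1; first by rewrite /=; lia.
  by move: Fj; rewrite /F /= -iterSr prednK //; lia.
have fin : (mu (\bigcup_(k in [set k | (0 <= k)%N]) F k) < +oo)%E.
  apply: le_lt_trans (probability_le1 _ _) (ltry _) => //.
  exact: bigcup_measurable.
have cvgF := lim_sup_set_cvg mu F mF fin.
have ge : (mu B <= mu (lim_sup_set F))%E.
  rewrite -(cvg_lim _ cvgF) //.
  apply: lime_ge; first by apply/cvg_ex; exists (mu (lim_sup_set F)).
  apply: nearW => n; rewrite -(measure_preimage_iter mT pT n mB).
  apply: le_measure; rewrite ?inE; [exact: mF | exact: bigcup_measurable |].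
  by move=> x Fx; exists n => /=.
have I1 : mu (lim_sup_set F) = 1%E.
  have [I0|//] := ergodic mI invI.
  by move: B0; rewrite I0 in ge; rewrite lt_neqAle eq_le ge measure_ge0.
exists (~` lim_sup_set F); split; first exact: measurableC.
  by rewrite probability_setC // I1 subee.
move=> x /= notQ IFx; apply: notQ => q.
by have [j /= qj Fj] := IFx q Logic.I; exists j.
Qed.

End recurrence.

Section reflections.
Variables (V : nat -> Prop) (p : nat).
Hypothesis quick_return : forall n, (p <= n)%N -> V n ->
  exists2 i, (0 < i <= n %/ 4)%N & V (n + i).

Lemma quick_returns_cover v0 : V v0 -> (p <= v0)%N ->
  forall t, (v0 <= t)%N ->
  exists k, [/\ V k, (p <= k)%N, (k <= t)%N & (t <= k + k %/ 4)%N].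
Proof.
move=> Vv0 pv0 t /subnKC <-; elim: (t - v0)%N => [|s [k [Vk pk kt tk]]].
  by exists v0; rewrite addn0 leq_addr.
have [tk'|kt'] := leqP (v0 + s.+1) (k + k %/ 4); first by exists k; split => //; lia.
have [i /andP[i0 ik] Vki] := quick_return pk Vk.
by exists (k + i); split => //; lia.
Qed.

(* A point [m] is written as [k + (m - k)] with [k] a return time and
   [N <= m - k <= k]; the reflection [m |-> 2k - m] then costs [(m - k) M],
   and [2k - m < m] allows strong induction.  The constant absorbs [m < L]. *)
Lemma affine_bound_of_reflections (R : realDomainType) (a : nat -> R) (M : R)
    (N : nat) : 0 <= M -> (exists2 v0, (p <= v0)%N & V v0) ->
  (forall k m, V k -> (N <= m <= k)%N -> (0 < m)%N ->
     `|a (k + m)%N + a (k - m)%N| < m%:R * M) ->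
  exists C, forall m, `|a m| <= M * m%:R + C.
Proof.
move=> M0 [v0 pv0 Vv0] reflect.
have cover := quick_returns_cover Vv0 pv0.
pose L := (3 * v0 + 3 * N + 60)%N.
exists (\sum_(i < L) `|a i|); elim/ltn_ind => m IH.
have [mL|Lm] := ltnP m L.
  rewrite (bigD1 (Ordinal mL)) //=.
  have : 0 <= \sum_(i < L | i != Ordinal mL) `|a i| by apply: sumr_ge0.
  have : 0 <= M * m%:R by apply: mulr_ge0.
  lra.
have [k [Vk _ kt tk]] := cover (2 * (m %/ 3))%N ltac:(lia).
have am := reflect k (m - k)%N Vk ltac:(lia) ltac:(lia).
rewrite subnKC in am; last by lia.
have IHr := IH (k - (m - k))%N ltac:(lia).
have tri : `|a m| <= `|a m + a (k - (m - k))%N| + `|a (k - (m - k))%N|.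
  by rewrite -[X in `|X| <= _](addrK (a (k - (m - k))%N)) ler_normB.
apply: le_trans tri (le_trans (lerD (ltW am) IHr) _).
rewrite addrA mulrC -mulrDr -natrD lerD2r.
by apply: ler_wpM2l => //; rewrite ler_nat; lia.
Qed.

End reflections.

Lemma limn_esup_le_of_affine_bound (R : realType) (b : nat -> R) (K C : R) :
  (forall n, `|b n| <= K * n%:R + C) ->
  (limn_esup (fun n => (n%:R^-1 * `|b n|)%:E) <= K%:E)%E.
Proof.
move=> bKC; apply/lee_addgt0Pr => e e0.
set n0 := Num.Def.archi_bound (`|C| / e).
have n0C : `|C| < n0%:R * e.
  by rewrite -ltr_pdivrMr //; apply: archi_boundP; apply: divr_ge0 => //; lra.
rewrite limn_esup_lim; apply: lime_le; first exact: is_cvg_esups.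
exists n0.+1 => // n /= n0n; apply: ge_ereal_sup => _ [k /= nk <-].
have k0 : (0 : R) < k%:R by rewrite ltr0n; lia.
have n0k : n0%:R * e <= k%:R * e by apply: ler_wpM2r; [lra | rewrite ler_nat; lia].
rewrite -EFinD lee_fin ler_pdivrMl //.
have := bKC k; have := ler_norm C; nra.
Qed.

Theorem mainTheorem10 (d : measure_display) (X : measurableType d)
  (R : realType) (mu : probability X R) (T Tinv : X -> X)
  (hT : invertible_mpt_ergodic mu T Tinv)
  (f : X -> R) (hf : measurable_fun setT f) (M : R) (A : set X)
  (hA : measurable A) (hApos : (0 < mu A)%E)
  (hbound : forall x, A x -> exists N : nat, forall n : nat, (N <= n)%N ->
     (n%:R)^-1 * `|f (iter n Tinv x) + f (iter n T x)| < M) :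
  {ae mu, forall x,
     (limn_esup (fun n : nat => ((n%:R)^-1 * `|f (iter (2 * n) T x)|)%:E)
        <= (24 * M)%:E)%E}.
Proof.
have [TK [TiK [mT [mTi [pT ergodic]]]]] := hT.
pose g n x := (n%:R)^-1 * `|f (iter n Tinv x) + f (iter n T x)|.
pose good N := A `&` [set x | forall n, (N <= n)%N -> g n x < M].
have mgood N : measurable (good N).
  by apply: measurableI hA (measurable_lt_from _ _ _) => n;
    exact: measurable_fun_scaled_sum_iter.
have [N goodN0] : exists N, (0 < mu (good N))%E.
  apply: exists_measure_gt0_cover hA mgood hApos _ => x Ax.
  by have [N hN] := hbound x Ax; exists N.
have M0 : 0 <= M.
  have [y [_ /(_ N (leqnn N)) gy]] : good N !=set0.
    by apply/set0P/negP => /eqP g0; rewrite g0 measure0 ltxx in goodN0.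
  by apply: le_trans (ltW gy); rewrite mulr_ge0 // invr_ge0.
apply: filterS2 (ae_infinitely_many_visits mT pT ergodic (mgood N) goodN0)
  (ae_eventually_quick_return TK TiK mT mTi pT (mgood N))
  => x visits [p quick].
have [v0 pv0 v0good] := visits p.
have reflect k m : good N (iter k T x) -> (N <= m <= k)%N -> (0 < m)%N ->
    `|f (iter (k + m) T x) + f (iter (k - m) T x)| < m%:R * M.
  move=> [_ /(_ m) gm] /andP[Nm mk] m0; move: (gm Nm).
  by rewrite /g ltr_pdivrMl ?ltr0n // iter_cancel_subn // -iterD addnC addrC.
have [C hC] := affine_bound_of_reflections quick (a := fun n => f (iter n T x))
  M0 (ex_intro2 _ _ v0 pv0 v0good) reflect.
apply: le_trans (@limn_esup_le_of_affine_bound _ _ (2 * M) C _) _.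
  by move=> n; rewrite -mulrA mulrCA -natrM; exact: hC.
by rewrite lee_fin; lra.
Qed.
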